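(* Let $f:\mathbb{R}^n_{>0}\to\mathbb{R}^n_{>0}$ be order-preserving and homogeneous. The eigenspace $E(f)$ is nonempty and bounded in $(\mathbb{R}^n_{>0},d_H)$ if and only if for every nonempty proper subset $J\subset[n]$, $$r(f^J_0)<\lambda\big(f^{[n]\setminus J}_\infty\big).$$
   Context: $[n]=\{1,\dots,n\}$. For $x,y\in\mathbb{R}^n$, $x\le y$ means $y_i\ge x_i$ for all $i$. A map $f$ is order-preserving if $x\le y$ implies $f(x)\le f(y)$, and homogeneous if $f(tx)=tf(x)$ for all $t>0$. Hilbert's projective metric on $\mathbb{R}^n_{>0}$ is $d_H(x,y)=\log\max_{i,j\in[n]}\frac{y_ix_j}{x_iy_j}$. $E(f)=\{x\in\mathbb{R}^n_{>0}: f(x)=\mu x\text{ for some }\mu\}$ is the set of entrywise positive eigenvectors of $f$. Every order-preserving homogeneous $f:\mathbb{R}^n_{>0}\to\mathbb{R}^n_{>0}$ extends continuously (and uniquely) to order-preserving homogeneous maps $\mathbb{R}^n_{\ge0}\to\mathbb{R}^n_{\ge0}$ and $(0,\infty]^n\to(0,\infty]^n$ (order topology on the extended reals, conventions $c<\infty$, $c\cdot\infty=\infty$ for $c>0$); these extensions are also denoted $f$. For $\alpha\in[-\infty,\infty]$ and $J\subseteq[n]$, $P^J_\alpha$ is the map with $P^J_\alpha(x)_j=x_j$ if $j\in J$ and $P^J_\alpha(x)_j=\alpha$ otherwise. Define $f^J_0=P^J_0\circ f\circ P^J_0:\mathbb{R}^n_{\ge0}\to\mathbb{R}^n_{\ge0}$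 and $f^J_\infty=P^J_\infty\circ f\circ P^J_\infty:(0,\infty]^n\to(0,\infty]^n$. For an order-preserving homogeneous map $g$ on $\mathbb{R}^n_{\ge0}$ or on $(0,\infty]^n$, the upper and lower Collatz–Wielandt numbers are $r(g)=\inf_{x\in\mathbb{R}^n_{>0}}\max_{i\in[n]}g(x)_i/x_i$ and $\lambda(g)=\sup_{x\in\mathbb{R}^n_{>0}}\min_{i\in[n]}g(x)_i/x_i$, with values in $[0,\infty]$ (a ratio with infinite numerator is $\infty$). *)

(* R : realType, vectors in R^n are functions 'I_n -> R,
   vectors in (0,oo]^n are functions 'I_n -> \bar R. *)
From HB Require Import structures.
From mathcomp Require Import all_boot all_order all_algebra.
From mathcomp Require Import all_classical all_reals.
From mathcomp Require Import ereal exp.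
Set Implicit Arguments. Unset Strict Implicit. Unset Printing Implicit Defensive.
Import Order.TTheory GRing.Theory Num.Theory.
Local Open Scope classical_set_scope.
Local Open Scope ring_scope.

Section Defs.
Variables (R : realType) (n : nat).
Notation vec := ('I_n -> R).
Notation evec := ('I_n -> \bar R).

Definition posvec (x : vec) : Prop := forall i, 0 < x i.
Definition vle (x y : vec) : Prop := forall i, x i <= y i.

(* f maps R^n_{>0} into R^n_{>0} (f is only relevant on R^n_{>0}) *)
Definition maps_pos (f : vec -> vec) : Prop :=
  forall x, posvec x -> posvec (f x).
Definition order_preserving_map (f : vec -> vec) : Prop :=
  forall x y, posvec x -> posvec y -> vle x y -> vle (f x) (f y).
Definition homogeneous_map (f : vec -> vec) : Prop :=
  forall (t : R) x, 0 < t -> posvec x -> f (fun i => t * x i) = (fun i => t * f x i).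

Definition hilbert_dist (x y : vec) : R :=
  ln (\big[Num.max/1]_(i < n) \big[Num.max/1]_(j < n) (y i * x j / (x i * y j))).

Definition pos_eigenvectors (f : vec -> vec) : set vec :=
  [set x | posvec x /\ exists mu : R, f x = (fun i => mu * x i)].

Definition nonempty_bounded_hilbert (A : set vec) : Prop :=
  (exists x, A x) /\ (exists M : R, forall x y, A x -> A y -> hilbert_dist x y <= M).

(* continuous extension of f to R^n_{>=0}: f(x) = lim_{eps->0+} f(x + eps 1)
   (a decreasing limit, i.e. an infimum) *)
Definition ext0 (f : vec -> vec) (x : vec) : vec :=
  fun i => inf [set f (fun k => x k + e) i | e in [set e : R | 0 < e]].

(* continuous extension of f to (0,oo]^n: f(x) = lim_{t->oo} f(min(x, t 1))
   (an increasing limit, i.e. a supremum in \bar R) *)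
Definition trunc (x : evec) (t : R) : vec :=
  fun k => fine (Order.min (x k) t%:E).
Definition extinf (f : vec -> vec) (x : evec) : evec :=
  fun i => ereal_sup [set (f (trunc x t) i)%:E | t in [set t : R | 0 < t]].

Definition P0 (J : {set 'I_n}) (x : vec) : vec :=
  fun j => if j \in J then x j else 0.
Definition Pinf (J : {set 'I_n}) (x : evec) : evec :=
  fun j => if j \in J then x j else +oo%E.

Definition f0J (f : vec -> vec) (J : {set 'I_n}) : vec -> vec :=
  fun x => P0 J (ext0 f (P0 J x)).
Definition finfJ (f : vec -> vec) (J : {set 'I_n}) : evec -> evec :=
  fun x => Pinf J (extinf f (Pinf J x)).

Definition cw_upper (g : vec -> vec) : \bar R :=
  ereal_inf [set (\big[Num.max/0]_(i < n) (g x i / x i))%:E | x in posvec].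

(* lower Collatz-Wielandt number of a map on (0,oo]^n; an infinite
   numerator gives the ratio +oo *)
Definition cw_lower (g : evec -> evec) : \bar R :=
  ereal_sup [set (\big[Order.min/+oo%E]_(i < n)
                    (g (fun k => (x k)%:E) i * ((x i)^-1)%:E))%E | x in posvec].

End Defs.

(* The strict inequalities r(f^J_0) < lambda(f^{[n]\J}_oo) amount to witnesses,
   for every proper J, of a level c and positive vectors y, z with f y < c y on J
   and f z > c z off J.  Such witnesses rule out vectors that are sub-eigen on J,
   super-eigen off J, and have a large gap between their J- and non-J-entries;
   by pigeonhole on level sets, a vector without gaps has max/min < S^n for a
   uniform S.  Applied to eigenvectors of u^-1 f(u .), this bounds E(f) in
   Hilbert's metric; applied to fixed points of x |-> clamp (f x / mu) in a box,
   it gives for each mu a sub- or a super-eigenvector in a fixed box, and a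
   monotone limit at the critical mu followed by Knaster-Tarski gives an
   eigenvector.
   Conversely, if the inequality fails for J and u is an eigenvector, then after
   normalising f at u every positive vector is sub-eigen at some entry in J and
   super-eigen at some entry off J.  This yields, for every s, a sub-eigenvector
   equal to 1 off J and to s somewhere in J, and dually a super-eigenvector;
   Knaster-Tarski between them gives eigenvectors at Hilbert distance at least
   log s from u. *)

From HB Require Import structures.
From mathcomp Require Import all_boot all_order all_algebra.
From mathcomp Require Import all_classical all_reals.
From mathcomp Require Import ereal exp.
From mathcomp.algebra_tactics Require Import ring lra.
Import Order.TTheory GRing.Theory Num.Theory.
Set Implicit Arguments. Unset Strict Implicit. Unset Printing Implicit Defensive.
Local Open Scope classical_set_scope.
Local Open Scope ring_scope.

Section Vectors.
Variables (R : realType) (n : nat).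
Notation vec := ('I_n -> R).

Definition box (a b x : vec) := forall i, a i <= x i /\ x i <= b i.
Definition vsup (S : set vec) : vec := fun i => sup [set x i | x in S].
Definition vinf (S : set vec) : vec := fun i => inf [set x i | x in S].

Definition vscale (t : R) (x : vec) : vec := fun i => t * x i.
Definition vconst (c : R) : vec := fun _ => c.

Lemma posvec_vscale t x : 0 < t -> posvec x -> posvec (vscale t x).
Proof. by move=> t0 px i; rewrite /vscale mulr_gt0. Qed.

Lemma posvec_vconst c : 0 < c -> posvec (vconst c).
Proof. by move=> c0 i. Qed.

Lemma exists_argmax (P : pred 'I_n) (F : 'I_n -> R) i0 :
  P i0 -> exists i, P i /\ forall j, P j -> F j <= F i.
Proof. by move=> Pi0; case: (arg_maxP F Pi0) => i Pi Hi; exists i. Qed.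

Lemma exists_argmin (P : pred 'I_n) (F : 'I_n -> R) i0 :
  P i0 -> exists i, P i /\ forall j, P j -> F i <= F j.
Proof. by move=> Pi0; case: (arg_minP F Pi0) => i Pi Hi; exists i. Qed.

Lemma posvec_ratio_bound (y : vec) : posvec y -> exists S, forall i k, y i <= S * y k.
Proof.
move=> py; exists (\big[Num.max/1]_i \big[Num.max/1]_k (y i / y k)) => i k.
rewrite -ler_pdivrMr //.
by apply: le_trans (le_bigmax _ _ i); exact: (le_bigmax _ (fun k => y i / y k) k).
Qed.

Definition vmax (x : vec) : R := \big[Num.max/0]_k x k.

Lemma vmax_ge x k : x k <= vmax x.
Proof. exact: (le_bigmax _ x k). Qed.

Lemma vmax_le x c : 0 <= c -> (forall k, x k <= c) -> vmax x <= c.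
Proof. by move=> c0 h; apply: bigmax_le => // k _; exact: h. Qed.

Lemma vmax_ge0 x : 0 <= vmax x.
Proof. by apply/bigmax_geP; left. Qed.

Lemma vmax_mono x y : vle x y -> vmax x <= vmax y.
Proof.
by move=> xy; apply: vmax_le (vmax_ge0 y) _ => k; exact: le_trans (xy k) (vmax_ge y k).
Qed.

Lemma vmax_vscale t x : 0 < t -> vmax (vscale t x) = t * vmax x.
Proof.
move=> t0; rewrite /vmax; apply: (big_ind2 (fun a b => a = t * b)) => //; first by rewrite mulr0.
by move=> a1 b1 a2 b2 -> ->; rewrite maxr_pMr // ltW.
Qed.

Lemma vmax_gt0 x (i0 : 'I_n) : posvec x -> 0 < vmax x.
Proof. by move=> px; exact: lt_le_trans (px i0) (vmax_ge x i0). Qed.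

Lemma vmax_attained x (i0 : 'I_n) : posvec x -> exists k, vmax x = x k.
Proof.
move=> px; have [k [_ hk]] := @exists_argmax xpredT x i0 isT.
exists k; apply/eqP; rewrite eq_le vmax_ge andbT.
by apply: vmax_le (ltW (px k)) _ => j; exact: hk.
Qed.

Lemma posvec_box (a b x : vec) : posvec a -> box a b x -> posvec x.
Proof. by move=> pa bx i; exact: lt_le_trans (pa i) (proj1 (bx i)). Qed.

Lemma vle_trans (x y z : vec) : vle x y -> vle y z -> vle x z.
Proof. by move=> xy yz i; exact: le_trans (xy i) (yz i). Qed.

Lemma vle_anti (x y : vec) : vle x y -> vle y x -> x = y.
Proof. by move=> xy yx; apply: funext => i; apply: le_anti; rewrite xy yx. Qed.

Lemma vsup_ub (S : set vec) (b x : vec) :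
  (forall y, S y -> vle y b) -> S x -> vle x (vsup S).
Proof.
move=> Sb Sx i; apply: ub_le_sup; last by exists x.
by exists (b i) => _ [y Sy <-]; exact: Sb.
Qed.

Lemma vsup_le (S : set vec) (c : vec) :
  S !=set0 -> (forall y, S y -> vle y c) -> vle (vsup S) c.
Proof.
move=> [x Sx] Sc i; apply: ge_sup; first by exists (x i), x.
by move=> _ [y Sy <-]; exact: Sc.
Qed.

Lemma vinf_lb (S : set vec) (b x : vec) :
  (forall y, S y -> vle b y) -> S x -> vle (vinf S) x.
Proof.
move=> Sb Sx i; apply: ge_inf; last by exists x.
by exists (b i) => _ [y Sy <-]; exact: Sb.
Qed.

Lemma vinf_ge (S : set vec) (c : vec) :
  S !=set0 -> (forall y, S y -> vle c y) -> vle c (vinf S).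
Proof.
move=> [x Sx] Sc i; apply: lb_le_inf; first by exists (x i), x.
by move=> _ [y Sy <-]; exact: Sc.
Qed.

(* Knaster-Tarski: the supremum of the post-fixed points is a fixed point. *)
Lemma box_fixpoint (h : vec -> vec) (a b : vec) :
  vle a b ->
  (forall x y, box a b x -> box a b y -> vle x y -> vle (h x) (h y)) ->
  (forall x, box a b x -> box a b (h x)) ->
  exists2 x, box a b x & h x = x.
Proof.
move=> ab hmon hbox.
pose S := [set x | box a b x /\ vle x (h x)].
have ba : box a b a by move=> i; rewrite lexx ab.
have Sa : S a by split => // i; have [] := hbox a ba i.
have Sb y : S y -> vle y b by move=> [by' _] i; case: (by' i).
have S0 : S !=set0 by exists a.
set X := vsup S.
have le_X x : S x -> vle x X by exact: vsup_ub Sb.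
have bX : box a b X by move=> i; split; [exact: le_X Sa i | exact: vsup_le S0 Sb i].
have X_le_hX : vle X (h X).
  apply: vsup_le => // y Sy; apply: vle_trans (proj2 Sy) _.
  by apply: hmon => //; [exact: proj1 Sy | exact: le_X].
have ShX : S (h X) by split; [exact: hbox | apply: hmon => //; exact: hbox].
by exists X => //; apply: vle_anti => //; exact: le_X.
Qed.

Lemma box_fixpoint_sub_super (h : vec -> vec) (a b : vec) :
  posvec a -> order_preserving_map h -> vle a b -> vle a (h a) -> vle (h b) b ->
  exists2 x, box a b x & h x = x.
Proof.
move=> pa h_op ab a_ha hb_b.
have pb : posvec b := posvec_box pa (fun i => conj (ab i) (lexx _)).
apply: box_fixpoint => // [x y bx by' xy|x bx i].
  exact: h_op (posvec_box pa bx) (posvec_box pa by') xy.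
have px := posvec_box pa bx; split.
  by apply: le_trans (a_ha i) _; apply: h_op pa px _ i => k; case: (bx k).
by apply: le_trans _ (hb_b i); apply: h_op px pb _ i => k; case: (bx k).
Qed.

End Vectors.

Section OrderPreservingHomogeneous.
Variables (R : realType) (n : nat).
Notation vec := ('I_n -> R).

Definition oph_map (f : vec -> vec) :=
  [/\ maps_pos f, order_preserving_map f & homogeneous_map f].

Variable f : vec -> vec.
Hypothesis f_oph : oph_map f.

Lemma oph_pos x : posvec x -> posvec (f x).
Proof. by case: f_oph => mp _ _; exact: mp. Qed.

Lemma oph_le x y : posvec x -> posvec y -> vle x y -> vle (f x) (f y).
Proof. by case: f_oph => _ op _; exact: op. Qed.

Lemma oph_vscale t x : 0 < t -> posvec x -> f (vscale t x) = vscale t (f x).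
Proof. by case: f_oph => _ _ hg; exact: hg. Qed.

Lemma oph_le_vscale x y t : 0 < t -> posvec x -> posvec y ->
  vle x (vscale t y) -> vle (f x) (vscale t (f y)).
Proof.
by move=> t0 px py xy; rewrite -oph_vscale //; apply: oph_le => //; exact: posvec_vscale.
Qed.

Lemma oph_vscale_le x y t : 0 < t -> posvec x -> posvec y ->
  vle (vscale t y) x -> vle (vscale t (f y)) (f x).
Proof.
by move=> t0 px py yx; rewrite -oph_vscale //; apply: oph_le => //; exact: posvec_vscale.
Qed.

Lemma subeigen_le_supereigen x y mu nu (i0 : 'I_n) : posvec x -> posvec y ->
  (forall i, mu * x i <= f x i) -> (forall i, f y i <= nu * y i) -> mu <= nu.
Proof.
move=> px py hx hy.
have [i [_ Hi]] := @exists_argmax _ _ xpredT (fun i => x i / y i) i0 isT.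
set t := x i / y i.
have t0 : 0 < t by rewrite divr_gt0.
have xty : vle x (vscale t y) by move=> j; rewrite /vscale -ler_pdivrMr //; exact: Hi.
have xi : x i = t * y i by rewrite /t divfK // gt_eqF.
have fxi := oph_le_vscale t0 px py xty i; rewrite /vscale in fxi.
have : mu * x i <= nu * x i.
  apply: le_trans (hx i) _; apply: le_trans fxi _.
  by rewrite xi mulrCA ler_wpM2l // ltW.
by rewrite ler_pM2r.
Qed.

End OrderPreservingHomogeneous.

Lemma exists_notin (T : finType) (K : {set T}) : K != [set: T]%SET -> exists k, k \notin K.
Proof. by rewrite -properT => /properP[_ [k _ kK]]; exists k. Qed.

Section Gaps.
Variables (R : realType) (n : nat).
Notation vec := ('I_n -> R).

Definition cw_separated (f : vec -> vec) :=
  forall K : {set 'I_n}, K != finset.set0 -> K != finset.setT ->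
  exists c y z, [/\ posvec y, posvec z, (forall i, i \in K -> f y i < c * y i)
                  & (forall i, i \notin K -> c * z i < f z i)].

Definition gapped (S : R) (K : {set 'I_n}) (x : vec) :=
  forall j k, j \in K -> k \notin K -> S * x k <= x j.

Definition split_eigen (f : vec -> vec) (K : {set 'I_n}) (mu : R) (x : vec) :=
  (forall j, j \in K -> mu * x j <= f x j) /\ (forall k, k \notin K -> f x k <= mu * x k).

Lemma gapped_le S S' K x : posvec x -> S' <= S -> gapped S K x -> gapped S' K x.
Proof.
by move=> px SS' gx j k jK kK; apply: le_trans (gx j k jK kK); rewrite ler_wpM2r // ltW.
Qed.

Variable f : vec -> vec.
Hypothesis f_oph : oph_map f.

Lemma gapped_subeigen_lt K c y S mu x :
  posvec y -> (forall i k, y i <= S * y k) -> K != finset.set0 ->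
  (forall i, i \in K -> f y i < c * y i) ->
  posvec x -> gapped S K x -> (forall j, j \in K -> mu * x j <= f x j) -> mu < c.
Proof.
move=> py yS /set0Pn[j0 j0K] fy px gx hx.
have [i [iK Hi]] := @exists_argmax _ _ (fun j => j \in K) (fun j => x j / y j) j0 j0K.
set t := x i / y i.
have t0 : 0 < t by rewrite divr_gt0.
have xi : t * y i = x i by rewrite /t divfK // gt_eqF.
have xty : vle x (vscale t y).
  move=> j; rewrite /vscale; case: (boolP (j \in K)) => jK.
    by rewrite -ler_pdivrMr //; exact: Hi.
  have := gx i j iK jK; have := yS i j; have := px j; have := py j; have := py i.
  by rewrite -xi => *; nra.
have fxi := oph_le_vscale f_oph t0 px py xty i; rewrite /vscale in fxi.
have : mu * x i < c * x i.
  apply: le_lt_trans (hx i iK) _; apply: le_lt_trans fxi _.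
  by rewrite -xi mulrCA ltr_pM2l // fy.
by rewrite ltr_pM2r.
Qed.

Lemma gapped_supereigen_gt K c z S mu x :
  posvec z -> (forall i k, z i <= S * z k) -> K != finset.setT ->
  (forall i, i \notin K -> c * z i < f z i) ->
  posvec x -> gapped S K x -> (forall k, k \notin K -> f x k <= mu * x k) -> c < mu.
Proof.
move=> pz zS /exists_notin[k0 k0K] fz px gx hx.
have [k [kK Hk]] := @exists_argmin _ _ (fun j => j \notin K) (fun j => x j / z j) k0 k0K.
set s := x k / z k.
have s0 : 0 < s by rewrite divr_gt0.
have xk : s * z k = x k by rewrite /s divfK // gt_eqF.
have szx : vle (vscale s z) x.
  move=> j; rewrite /vscale; case: (boolP (j \in K)) => jK.
    have := gx j k jK kK; have := zS j k; have := px j; have := pz j; have := pz k.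
    by rewrite -xk => *; nra.
  by rewrite -ler_pdivlMr //; exact: Hk.
have fxk := oph_vscale_le f_oph s0 px pz szx k; rewrite /vscale in fxk.
have : c * x k < mu * x k.
  apply: lt_le_trans _ (hx k kK); apply: lt_le_trans _ fxk.
  by rewrite -xk mulrCA ltr_pM2l // fz.
by rewrite ltr_pM2r.
Qed.

Lemma gap_bound_of_separating K c y z : K != finset.set0 -> K != finset.setT ->
  posvec y -> posvec z ->
  (forall i, i \in K -> f y i < c * y i) -> (forall i, i \notin K -> c * z i < f z i) ->
  exists2 S, 1 <= S & forall mu x, posvec x -> gapped S K x -> ~ split_eigen f K mu x.
Proof.
move=> K0 K1 py pz fy fz.
have [Sy yS] := posvec_ratio_bound py; have [Sz zS] := posvec_ratio_bound pz.
set S := Num.max 1 (Num.max Sy Sz).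
have le_S (w : vec) T : posvec w -> T <= S -> (forall i k, w i <= T * w k) ->
    forall i k, w i <= S * w k.
  by move=> pw TS wT i k; apply: le_trans (wT i k) _; rewrite ler_wpM2r // ltW.
exists S => [|mu x px gx [sub super]]; first by rewrite le_max lexx.
have SyS : Sy <= S by rewrite !le_max lexx orbT.
have SzS : Sz <= S by rewrite !le_max lexx !orbT.
have mu_lt_c := gapped_subeigen_lt py (le_S _ _ py SyS yS) K0 fy px gx sub.
have c_lt_mu := gapped_supereigen_gt pz (le_S _ _ pz SzS zS) K1 fz px gx super.
by have := lt_trans mu_lt_c c_lt_mu; rewrite ltxx.
Qed.

Lemma exists_gap_bound : cw_separated f -> exists2 S, 1 <= S &
  forall K, K != finset.set0 -> K != finset.setT ->
  forall mu x, posvec x -> gapped S K x -> ~ split_eigen f K mu x.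
Proof.
move=> sep.
have bound K : exists S, 1 <= S /\ (K != finset.set0 -> K != finset.setT ->
    forall mu x, posvec x -> gapped S K x -> ~ split_eigen f K mu x).
  have [K0|/negP K0] := boolP (K != finset.set0); last by exists 1.
  have [K1|/negP K1] := boolP (K != finset.setT); last by exists 1.
  have [c [y [z [py pz fy fz]]]] := sep K K0 K1.
  by have [S S1 hS] := gap_bound_of_separating K0 K1 py pz fy fz; exists S.
have [kap hkap] := choice bound.
exists (\big[Num.max/1]_(K : {set 'I_n}) kap K); first by apply/bigmax_geP; left.
move=> K K0 K1 mu x px gx; have [_ hK] := hkap K.
exact: hK K0 K1 mu x px (gapped_le px (le_bigmax _ kap K) gx).
Qed.

End Gaps.

Section Spread.
Variables (R : realType) (n : nat).
Notation vec := ('I_n -> R).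
Variables (x : vec) (S : R).
Hypotheses (S_gt1 : 1 < S) (px : posvec x)
  (ungapped : forall K, K != finset.set0 -> K != finset.setT -> ~ gapped S K x).

Let level (m : R) (p : nat) := [set j : 'I_n | x j < m * S ^+ p]%SET.

(* Without gaps, each level set [x < m S^p] strictly grows until it is everything. *)
Lemma card_ungapped_level (k0 : 'I_n) p :
  (minn p.+1 n <= #|level (x k0) p.+1|)%N.
Proof.
have S0 : 0 < S := lt_trans ltr01 S_gt1.
have k0_level q : k0 \in level (x k0) q.+1.
  by rewrite inE -[X in X < _]mulr1 ltr_pM2l // exprn_egt1.
elim: p => [|p IH].
  by apply: leq_trans (geq_minl _ _) _; rewrite card_gt0; apply/set0Pn; exists k0.
set L := level (x k0) p.+1.
have Lsub : L \subset level (x k0) p.+2.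
  apply/fintype.subsetP => j; rewrite !inE => /lt_le_trans; apply.
  rewrite ler_pM2l // [leRHS]exprS.
  by apply: ler_peMl; [exact: exprn_ge0 (ltW S0) | exact: ltW].
have [LT|LT] := eqVneq L finset.setT.
  apply: leq_trans (geq_minr _ _) _.
  by have := subset_leq_card Lsub; rewrite LT cardsT card_ord.
have K0 : ~: L != finset.set0 by rewrite -finset.setCT (inj_eq (@finset.setC_inj _)).
have K1 : ~: L != finset.setT.
  by rewrite -finset.setC0 (inj_eq (@finset.setC_inj _)); apply/set0Pn; exists k0; exact: k0_level.
have [j [k [jL kL xjk]]] : exists j k, [/\ j \notin L, k \in L & x j < S * x k].
  apply: contrapT => H; apply: (ungapped K0 K1) => j k; rewrite !finset.in_setC negbK => jL kL.
  by rewrite leNgt; apply/negP => xjk; apply: H; exists j, k.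
have jL' : j \in level (x k0) p.+2.
  rewrite inE; apply: lt_le_trans xjk _; move: kL; rewrite inE => /ltW xk.
  by rewrite exprS mulrCA ler_pM2l.
have pr : L \proper level (x k0) p.+2 by apply/properP; split => //; exists j.
apply: (@leq_trans (minn p.+1 n).+1).
  by rewrite -minnSS leq_min geq_minl /=; exact: leq_trans (geq_minr _ _) (leqnSn _).
by apply: (leq_trans _ (proper_card pr)); rewrite ltnS.
Qed.

Lemma ungapped_ratio_lt i k : x i < S ^+ n * x k.
Proof.
have [k0 [_ min_k0]] := @exists_argmin _ _ xpredT x i isT.
have n_gt0 : (0 < n)%N := leq_ltn_trans (leq0n i) (ltn_ord i).
have : level (x k0) n = finset.setT.
  apply/eqP; rewrite eqEcard finset.subsetT cardsT card_ord.
  by have := card_ungapped_level k0 n.-1; rewrite prednK // minnn.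
move/setP/(_ i); rewrite !inE => /idP xi.
apply: lt_le_trans xi _; rewrite mulrC; apply: ler_wpM2l; last exact: min_k0.
exact: exprn_ge0 (ltW (lt_trans ltr01 S_gt1)).
Qed.

End Spread.

Section BoxEigenvectors.
Variables (R : realType) (n : nat).
Notation vec := ('I_n -> R).
Variable f : vec -> vec.
Hypothesis f_oph : oph_map f.

Definition clamp (d g : R) := Num.min (Num.max g d) 1.

Lemma clamp_mono d : {homo clamp d : a b / a <= b}.
Proof. by move=> a b ab; apply: le_min2 => //; exact: le_max2. Qed.

Lemma clamp_in_box d g : d <= 1 -> d <= clamp d g <= 1.
Proof. by move=> d1; rewrite le_min ge_min lexx orbT le_max lexx orbT d1. Qed.

Lemma clamp_lt1 d g : d <= 1 -> clamp d g < 1 -> g <= clamp d g.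
Proof.
rewrite /clamp => d1; case: (leP (Num.max g d) 1) => _; last by rewrite ltxx.
by rewrite le_max lexx.
Qed.

Lemma clamp_gtd d g : d <= 1 -> d < clamp d g -> clamp d g <= g.
Proof.
rewrite /clamp => d1; case: (leP g d) => gd; first by rewrite (min_idPl d1) ltxx.
by rewrite ge_min lexx.
Qed.

Lemma exists_clamped_eigen d mu : 0 < d -> d <= 1 -> 0 < mu ->
  exists2 x, box (vconst d) (vconst 1) x &
    (forall i, x i < 1 -> f x i <= mu * x i) /\ (forall i, d < x i -> mu * x i <= f x i).
Proof.
move=> d0 d1 mu0; pose h (x : vec) : vec := fun i => clamp d (f x i / mu).
have [x bx hx] : exists2 x, box (vconst d) (vconst 1) x & h x = x.
  apply: box_fixpoint => [i|x y bx by' xy i|x _ i]; first exact: d1.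
    apply: clamp_mono; rewrite ler_pM2r ?invr_gt0 //.
    have pd : posvec (vconst d : vec) := posvec_vconst d0.
    exact: (oph_le f_oph (posvec_box pd bx) (posvec_box pd by') xy) i.
  exact/andP/clamp_in_box.
have xE i : x i = clamp d (f x i / mu) by rewrite -{1}hx.
exists x => //; split=> i xi.
  by rewrite -ler_pdivrMl // mulrC xE; apply: clamp_lt1 d1 _; rewrite -xE.
by rewrite -ler_pdivlMl // mulrC xE; apply: clamp_gtd d1 _; rewrite -xE.
Qed.

Lemma gapped_clamped_split_eigen d mu K K' x : 1 < K -> 0 < d ->
  box (vconst d) (vconst 1) x ->
  (forall i, x i < 1 -> f x i <= mu * x i) -> (forall i, d < x i -> mu * x i <= f x i) ->
  K' != finset.set0 -> K' != finset.setT -> gapped K K' x -> split_eigen f K' mu x.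
Proof.
move=> K1 d0 bx lo hi /set0Pn[j0 j0K] /exists_notin[k0 k0K] gx; split=> [j jK|k kK].
  apply: hi; apply: lt_le_trans (gx j k0 jK k0K); apply: (@lt_le_trans _ _ (K * d)).
    by rewrite ltr_pMl.
  by rewrite ler_pM2l ?(lt_trans ltr01) //; exact: (proj1 (bx k0)).
apply: lo; have := gx j0 k j0K kK; have := proj2 (bx j0).
by have := posvec_box (posvec_vconst d0) bx k; rewrite /vconst; nra.
Qed.

Lemma exists_box_sub_or_supereigen (i0 : 'I_n) : cw_separated f -> exists d, [/\ 0 < d, d < 1 &
  forall mu, 0 < mu -> exists2 x, box (vconst d) (vconst 1) x &
    (forall i, f x i <= mu * x i) \/ (forall i, mu * x i <= f x i)].
Proof.
move=> sep; have [S S1 no_gap] := exists_gap_bound f_oph sep.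
set K := S + 1.
have K1 : 1 < K by rewrite /K; lra.
have K0 : 0 < K by rewrite /K; lra.
have Kn : 1 < K ^+ n by rewrite exprn_egt1 // -lt0n (leq_ltn_trans (leq0n i0) (ltn_ord i0)).
set d := (K ^+ n)^-1.
have d0 : 0 < d by rewrite invr_gt0 (lt_trans ltr01).
have d1 : d < 1 by rewrite invf_lt1 // (lt_trans ltr01).
exists d; split => // mu mu0.
have [x bx [lo hi]] := exists_clamped_eigen d0 (ltW d1) mu0.
have px : posvec x := posvec_box (posvec_vconst d0) bx.
exists x => //.
have [super|/existsNP[i1 /negP]] := pselect (forall i, f x i <= mu * x i); first by left.
rewrite -ltNge => fx_i1.
have [sub|/existsNP[k1 /negP]] := pselect (forall i, mu * x i <= f x i); first by right.
rewrite -ltNge => fx_k1; exfalso.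
have x_i1 : x i1 = 1.
  apply/eqP; rewrite eq_le (proj2 (bx i1)) leNgt; apply/negP => /lo.
  by rewrite leNgt fx_i1.
have x_k1 : x k1 = d.
  apply/eqP; rewrite eq_le (proj1 (bx k1)) andbT leNgt; apply/negP => /hi.
  by rewrite leNgt fx_k1.
have [K' [K'0 K'1 gx]] : exists K', [/\ K' != finset.set0, K' != finset.setT & gapped K K' x].
  apply: contrapT => no_gapK.
  have ungapped K' : K' != finset.set0 -> K' != finset.setT -> ~ gapped K K' x.
    by move=> K'0 K'1 gx; apply: no_gapK; exists K'.
  have := ungapped_ratio_lt K1 px ungapped i1 k1.
  by rewrite x_i1 x_k1 /d mulfV ?ltxx // gt_eqF // (lt_trans ltr01).
apply: (no_gap K' K'0 K'1 mu x px (gapped_le px _ gx)); first by rewrite /K; lra.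
exact: gapped_clamped_split_eigen K1 d0 bx lo hi K'0 K'1 gx.
Qed.

Lemma vinf_supereigen (T : set vec) (b : vec) mu : 0 < mu -> posvec b -> T !=set0 ->
  (forall y, T y -> vle b y /\ forall i, f y i <= mu * y i) ->
  vle b (vinf T) /\ forall i, f (vinf T) i <= mu * vinf T i.
Proof.
move=> mu0 pb T0 hT.
have bT : vle b (vinf T) by apply: vinf_ge T0 _ => y /hT[].
split => // i; rewrite -ler_pdivrMl //.
suff : vle (fun j => mu^-1 * f (vinf T) j) (vinf T) by move/(_ i).
apply: vinf_ge T0 _ => y Ty j; have [by' fy] := hT y Ty.
rewrite ler_pdivrMl //; apply: le_trans (fy j).
have pT : posvec (vinf T) by move=> k; exact: lt_le_trans (pb k) (bT k).
have py : posvec y by move=> k; exact: lt_le_trans (pb k) (by' k).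
exact: (oph_le f_oph pT py (vinf_lb (fun y Ty => proj1 (hT y Ty)) Ty)) j.
Qed.

End BoxEigenvectors.

Lemma antitone_vsup_approx (R : realType) (n : nat) (m : R -> 'I_n -> R) (b : 'I_n -> R)
    (mu0 eta nu : R) :
  (forall mu, mu0 < mu -> posvec (m mu) /\ vle (m mu) b) ->
  (forall mu mu', mu0 < mu -> mu <= mu' -> vle (m mu') (m mu)) ->
  1 < eta -> mu0 < nu ->
  exists2 mu, mu0 < mu <= nu &
    vle (vsup [set m mu | mu in [set mu | mu0 < mu]]) (vscale eta (m mu)).
Proof.
move=> hm anti eta1 nu0.
set Ms := [set m mu | mu in [set mu | mu0 < mu]].
have Msb y : Ms y -> vle y b by move=> [mu mu1 <-]; exact: (proj2 (hm mu mu1)).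
have Ms_nu : Ms (m nu) by exists nu.
have eta0 : 0 < eta := lt_trans ltr01 eta1.
have approx k : exists mu, mu0 < mu /\ vsup Ms k <= eta * m mu k.
  have hs : has_sup [set y k | y in Ms].
    by split; [exists (m nu k), (m nu) | exists (b k) => _ [y Hy <-]; exact: Msb].
  have Mk0 : 0 < vsup Ms k := lt_le_trans (proj1 (hm nu nu0) k) (vsup_ub Msb Ms_nu k).
  have ep : 0 < vsup Ms k - vsup Ms k / eta by rewrite subr_gt0 ltr_pdivrMr // ltr_pMr.
  have [_ [_ [mu mu1 <-] <-] lt] := sup_adherent ep hs.
  exists mu; split => //; move: lt; rewrite opprB addrCA subrr addr0 => /ltW.
  by rewrite ler_pdivrMr // mulrC.
have [kap hkap] := choice approx.
set mh := \big[Num.min/nu]_k kap k.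
have mh0 : mu0 < mh by apply: lt_bigmin nu0 _ => k _; case: (hkap k).
exists mh; first by rewrite mh0 /=; apply/bigmin_leP; left.
move=> k; apply: le_trans (proj2 (hkap k)) _; rewrite /vscale ler_pM2l //.
have mhk : mh <= kap k by exact: bigmin_le.
exact: (anti _ _ mh0 mhk) k.
Qed.

Section SupereigenLimit.
Variables (R : realType) (n : nat).
Notation vec := ('I_n -> R).
Variable f : vec -> vec.
Hypothesis f_oph : oph_map f.

Lemma least_box_supereigen d mu0 : 0 < d -> 0 < mu0 ->
  (forall mu, mu0 < mu ->
     exists2 x, box (vconst d) (vconst 1) x & forall i, f x i <= mu * x i) ->
  exists m : R -> vec,
    (forall mu, mu0 < mu ->
       box (vconst d) (vconst 1) (m mu) /\ forall i, f (m mu) i <= mu * m mu i) /\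
    (forall mu mu', mu0 < mu -> mu <= mu' -> vle (m mu') (m mu)).
Proof.
move=> d0 mu00 hyp; have pd : posvec (vconst d : vec) := posvec_vconst d0.
pose T mu := [set x | box (vconst d) (vconst 1) x /\ forall i, f x i <= mu * x i].
have Td mu y : T mu y -> vle (vconst d) y /\ forall i, f y i <= mu * y i.
  by move=> [by' fy]; split => // i; case: (by' i).
have Td_lb mu y : T mu y -> vle (vconst d) y by move/Td => [].
exists (fun mu => vinf (T mu)); split=> [mu mu1|mu mu' mu1 mm].
  have [x bx fx] := hyp mu mu1; have Tx : T mu x by [].
  have [dm fm] := vinf_supereigen f_oph (lt_trans mu00 mu1) pd (ex_intro _ x Tx) (Td mu).
  split => // i; split; first exact: dm.
  exact: le_trans (vinf_lb (Td_lb mu) Tx i) (proj2 (bx i)).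
have [x bx fx] := hyp mu mu1.
apply: vinf_ge; first by exists x.
move=> y [by' fy]; apply: vinf_lb (Td_lb mu') _; split => // i.
apply: le_trans (fy i) _; rewrite ler_wpM2r //.
exact: ltW (lt_le_trans d0 (proj1 (by' i))).
Qed.

Lemma box_supereigen_limit d mu0 : 0 < d -> 0 < mu0 ->
  (forall mu, mu0 < mu ->
     exists2 x, box (vconst d) (vconst 1) x & forall i, f x i <= mu * x i) ->
  exists2 x, box (vconst d) (vconst 1) x & forall i, f x i <= mu0 * x i.
Proof.
move=> d0 mu00 hyp; have pd : posvec (vconst d : vec) := posvec_vconst d0.
have [m [mT m_anti]] := least_box_supereigen d0 mu00 hyp.
have hm mu : mu0 < mu -> posvec (m mu) /\ vle (m mu) (vconst 1).
  by move=> /mT[bm _]; split; [exact: posvec_box pd bm | move=> i; case: (bm i)].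
set M := vsup [set m mu | mu in [set mu | mu0 < mu]].
have le_M mu : mu0 < mu -> vle (m mu) M.
  move=> mu1; apply: (vsup_ub (b := vconst 1)); last by exists mu.
  by move=> _ [mu' mu'1 <-]; exact: (proj2 (hm _ mu'1)).
have mu1 : mu0 < mu0 + 1 by lra.
have bM : box (vconst d) (vconst 1) M.
  move=> i; split; first exact: le_trans (proj1 (proj1 (mT _ mu1) i)) ((le_M _ mu1) i).
  apply: vsup_le => [|_ [mu mu2 <-]]; first by exists (m (mu0 + 1)), (mu0 + 1).
  exact: (proj2 (hm _ mu2)).
have pM : posvec M := posvec_box pd bM.
exists M => // i; apply/ler_addgt0Pr => e e0.
set nu := mu0 + e / 2; set eta := (mu0 + e) / nu.
have nu0 : mu0 < nu by rewrite /nu; lra.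
have nu_gt0 : 0 < nu by rewrite /nu; lra.
have eta1 : 1 < eta by rewrite /eta ltr_pdivlMr // mul1r /nu; lra.
have eta0 : 0 < eta := lt_trans ltr01 eta1.
(* M <= eta m(mh) with mu0 < mh <= nu gives f M <= eta mh m(mh) <= eta nu M = (mu0 + e) M. *)
have [mh /andP[mh0 mh_nu] Mmh] := antitone_vsup_approx hm m_anti eta1 nu0.
apply: le_trans (oph_le_vscale f_oph eta0 pM (proj1 (hm _ mh0)) Mmh i) _.
rewrite /vscale; apply: le_trans (_ : eta * (nu * M i) <= _).
  rewrite ler_pM2l //; apply: le_trans (proj2 (mT _ mh0) i) _.
  apply: le_trans (_ : nu * m mh i <= _); first by rewrite ler_pM2r // (proj1 (hm _ mh0)).
  by rewrite ler_pM2l //; exact: (le_M _ mh0) i.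
rewrite mulrA /eta divfK ?gt_eqF // mulrDl lerD2l.
by rewrite -[leRHS]mulr1 ler_wpM2l ?(ltW e0) //; exact: (proj2 (bM i)).
Qed.

End SupereigenLimit.

Section Duality.
Variables (R : realType) (n : nat).
Notation vec := ('I_n -> R).

Definition vinv (x : vec) : vec := fun i => (x i)^-1.
Definition dual (g : vec -> vec) : vec -> vec := fun x => vinv (g (vinv x)).

Lemma posvec_vinv x : posvec x -> posvec (vinv x).
Proof. by move=> px i; rewrite /vinv invr_gt0. Qed.

Lemma vinvK : involutive vinv.
Proof. by move=> x; apply: funext => i; rewrite /vinv invrK. Qed.

Variable f : vec -> vec.
Hypothesis f_oph : oph_map f.

Lemma oph_dual : oph_map (dual f).
Proof.
split.
- by move=> x px; apply/posvec_vinv/(oph_pos f_oph)/posvec_vinv.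
- move=> x y px py xy i; have fx := oph_pos f_oph (posvec_vinv px) i.
  have fy := oph_pos f_oph (posvec_vinv py) i.
  rewrite /dual /vinv lef_pV2 ?posrE //.
  apply: (oph_le f_oph (posvec_vinv py) (posvec_vinv px)) => k.
  by rewrite /vinv lef_pV2 ?posrE.
- move=> t x t0 px; rewrite /dual.
  have -> : vinv (fun i => t * x i) = vscale t^-1 (vinv x).
    by apply: funext => i; rewrite /vinv /vscale invfM mulrC.
  rewrite (oph_vscale f_oph) ?invr_gt0 //; last exact: posvec_vinv.
  by apply: funext => i; rewrite /vinv /vscale invfM invrK mulrC.
Qed.

Lemma dual_supereigenE y nu : 0 < nu -> posvec y ->
  (forall i, dual f y i <= nu * y i) <-> (forall i, nu^-1 * vinv y i <= f (vinv y) i).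
Proof.
move=> nu0 py; have fy := oph_pos f_oph (posvec_vinv py).
have E i : (dual f y i <= nu * y i) = (nu^-1 * vinv y i <= f (vinv y) i).
  have yi := py i; have fyi := fy i.
  by rewrite /dual {1}/vinv -[leRHS]invrK lef_pV2 ?posrE ?invr_gt0 ?mulr_gt0 // invfM.
by split=> h i; [rewrite -E | rewrite E].
Qed.

Lemma box_subeigen_limit d mu0 : 0 < d -> 0 < mu0 ->
  (forall mu, 0 < mu -> mu < mu0 ->
     exists2 x, box (vconst d) (vconst 1) x & forall i, mu * x i <= f x i) ->
  exists2 x, posvec x & forall i, mu0 * x i <= f x i.
Proof.
move=> d0 mu00 hyp; have pd : posvec (vconst d : vec) := posvec_vconst d0.
have [y by' fy] : exists2 y, box (vconst d) (vconst 1) y & forall i, dual f y i <= mu0^-1 * y i.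
  have mu0_inv : 0 < mu0^-1 by rewrite invr_gt0.
  apply: (box_supereigen_limit oph_dual d0 mu0_inv) => mu mu1.
  have mu_gt0 : 0 < mu by apply: lt_trans mu1; rewrite invr_gt0.
  have mu_inv0 : 0 < mu^-1 by rewrite invr_gt0.
  have mu_inv_lt : mu^-1 < mu0 by rewrite -(invrK mu0) ltf_pV2 ?posrE ?invr_gt0.
  have [x bx fx] := hyp _ mu_inv0 mu_inv_lt.
  have px := posvec_box pd bx.
  have pdx : posvec (vscale d^-1 x) by apply: posvec_vscale; rewrite ?invr_gt0.
  exists (vinv (vscale d^-1 x)).
    move=> i; have [dx x1] := bx i; have xi := px i; rewrite /vinv /vscale /vconst invfM invrK.
    rewrite /vconst in dx x1; split; first by rewrite ler_pMr // invf_ge1.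
    by rewrite mulrC ler_pdivrMl // mulr1.
  apply/dual_supereigenE => //; first exact: posvec_vinv.
  rewrite vinvK (oph_vscale f_oph) ?invr_gt0 // => i.
  by rewrite /vscale mulrCA ler_pM2l ?invr_gt0.
have py := posvec_box pd by'.
exists (vinv y); first exact: posvec_vinv.
by move/dual_supereigenE: fy; rewrite invrK; apply; rewrite ?invr_gt0.
Qed.

End Duality.

Section Existence.
Variables (R : realType) (n : nat).
Notation vec := ('I_n -> R).
Variable f : vec -> vec.
Hypothesis f_oph : oph_map f.

Lemma eigenvector_of_sub_super a b mu : 0 < mu -> posvec a -> posvec b ->
  (forall i, mu * a i <= f a i) -> (forall i, f b i <= mu * b i) ->
  exists2 v, posvec v & f v = vscale mu v.
Proof.
move=> mu0 pa pb fa fb.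
set t := \big[Num.max/1]_i (a i / b i).
have t0 : 0 < t by apply: lt_le_trans ltr01 _; apply/bigmax_geP; left.
have ab : vle a (vscale t b).
  by move=> i; rewrite /vscale -ler_pdivrMr // (le_bigmax _ (fun i => a i / b i) i).
pose h x := vscale mu^-1 (f x).
have h_op : order_preserving_map h.
  move=> x y px py xy i; rewrite /h /vscale ler_pM2l ?invr_gt0 //.
  exact: (oph_le f_oph px py xy) i.
have [v bv hv] : exists2 v, box a (vscale t b) v & h v = v.
  apply: box_fixpoint_sub_super => // i; rewrite /h.
    by rewrite /vscale ler_pdivlMl // fa.
  by rewrite (oph_vscale f_oph) // /vscale mulrCA ler_pM2l // ler_pdivrMl // fb.
exists v; first exact: posvec_box pa bv.
by rewrite -{2}hv; apply: funext => i; rewrite /h /vscale mulrA divff ?mul1r // gt_eqF.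
Qed.

Lemma exists_pos_eigenvector : cw_separated f -> exists2 x, posvec x & exists mu, f x = vscale mu x.
Proof.
move=> sep; case: (posnP n) => [n0|n_gt0].
  have no_index (i : 'I_n) : False by case: i => i; rewrite n0.
  exists (vconst 1) => [i|]; first by case: (no_index i).
  by exists 0; apply: funext => i; case: (no_index i).
pose i0 := Ordinal n_gt0.
have [d [d0 d1 sub_or_super]] := exists_box_sub_or_supereigen f_oph i0 sep.
have pd : posvec (vconst d : vec) := posvec_vconst d0.
have p1 : posvec (vconst 1 : vec) := posvec_vconst ltr01.
pose A := [set mu | 0 < mu /\ exists2 x, posvec x & forall i, mu * x i <= f x i].
have [ia [_ Hia]] := @exists_argmin _ _ xpredT (f (vconst 1)) i0 isT.
have [ib [_ Hib]] := @exists_argmax _ _ xpredT (f (vconst 1)) i0 isT.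
have Aa : A (f (vconst 1) ia).
  by split; [exact: oph_pos | exists (vconst 1) => // i; rewrite /vconst mulr1 Hia].
have A_ub mu : A mu -> mu <= f (vconst 1) ib.
  move=> [_ [x px fx]]; apply: (subeigen_le_supereigen f_oph i0 px p1 fx) => i.
  by rewrite /vconst mulr1 Hib.
have hsA : has_sup A by split; [exists (f (vconst 1) ia) | exists (f (vconst 1) ib) => mu /A_ub].
set rho := sup A.
have le_rho mu : A mu -> mu <= rho by exact: sup_upper_bound.
have rho0 : 0 < rho := lt_le_trans (oph_pos f_oph p1 ia) (le_rho _ Aa).
have above mu : rho < mu ->
    exists2 x, box (vconst d) (vconst 1) x & forall i, f x i <= mu * x i.
  move=> mu1; have mu0 := lt_trans rho0 mu1.
  have [x bx [super|sub]] := sub_or_super mu mu0; first by exists x.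
  have /le_rho : A mu by split => //; exists x => //; exact: posvec_box pd bx.
  by rewrite leNgt mu1.
have below mu : 0 < mu -> mu < rho ->
    exists2 x, box (vconst d) (vconst 1) x & forall i, mu * x i <= f x i.
  move=> mu0 mu1; have e0 : 0 < rho - mu by rewrite subr_gt0.
  have [mu' [_ [x' px' fx']] lt] := sup_adherent e0 hsA.
  have [x bx [super|sub]] := sub_or_super mu mu0; last by exists x.
  have := subeigen_le_supereigen f_oph i0 px' (posvec_box pd bx) fx' super.
  by rewrite leNgt; move: lt; rewrite opprB addrCA subrr addr0 => ->.
have [b bb fb] := box_supereigen_limit f_oph d0 rho0 above.
have [a pa fa] := box_subeigen_limit f_oph d0 rho0 below.
have [v pv fv] := eigenvector_of_sub_super rho0 pa (posvec_box pd bb) fa fb.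
by exists v => //; exists rho.
Qed.

End Existence.

Section HilbertDistance.
Variables (R : realType) (n : nat).
Notation vec := ('I_n -> R).

Lemma hilbert_dist_ge (x y : vec) i j : posvec x -> posvec y ->
  ln (y i * x j / (x i * y j)) <= hilbert_dist x y.
Proof.
move=> px py; set t := y i * x j / (x i * y j).
have t0 : 0 < t by rewrite /t !(mulr_gt0, invr_gt0).
have t_le : t <= \big[Num.max/1]_k \big[Num.max/1]_l (y k * x l / (x k * y l)).
  by apply: le_trans (le_bigmax _ _ i); exact: (le_bigmax _ (fun l => y i * x l / (x i * y l)) j).
by rewrite /hilbert_dist ler_ln ?posrE // (lt_le_trans t0 t_le).
Qed.

Lemma hilbert_dist_le (u x y : vec) C : posvec u -> posvec x -> posvec y -> 1 <= C ->
  (forall i k, x i / u i <= C * (x k / u k)) -> (forall i k, y i / u i <= C * (y k / u k)) ->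
  hilbert_dist x y <= ln (C * C).
Proof.
move=> pu px py C1 xC yC; have C0 : 0 < C := lt_le_trans ltr01 C1.
rewrite /hilbert_dist ler_ln ?posrE ?mulr_gt0 //; last first.
  by apply: lt_le_trans ltr01 _; apply/bigmax_geP; left.
have CC1 : 1 <= C * C by rewrite -[1]mulr1 ler_pM.
apply: bigmax_le => // i _; apply: bigmax_le => // j _.
have ui := pu i; have uj := pu j; have xi := px i; have xj := px j.
have yi := py i; have yj := py j.
have -> : y i * x j / (x i * y j) = (y i / u i / (y j / u j)) * (x j / u j / (x i / u i)).
  by field; rewrite !gt_eqF.
apply: ler_pM; rewrite ?divr_ge0 ?(ltW ui, ltW uj, ltW xi, ltW xj, ltW yi, ltW yj) //.
  by rewrite ler_pdivrMr ?divr_gt0.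
by rewrite ler_pdivrMr ?divr_gt0.
Qed.

End HilbertDistance.

Section Rescaling.
Variables (R : realType) (n : nat).
Notation vec := ('I_n -> R).
Variable f : vec -> vec.
Hypothesis f_oph : oph_map f.

Definition rescale (u : vec) (c : R) : vec -> vec :=
  fun x i => f (fun k => u k * x k) i / (c * u i).

Variables (u : vec) (c : R).
Hypotheses (pu : posvec u) (c0 : 0 < c).

Let posvec_mul x : posvec x -> posvec (fun k => u k * x k).
Proof. by move=> px k; rewrite mulr_gt0. Qed.

Lemma oph_rescale : oph_map (rescale u c).
Proof.
split.
- by move=> x px i; rewrite /rescale divr_gt0 ?mulr_gt0 //; exact: (oph_pos f_oph (posvec_mul px)).
- move=> x y px py xy i; rewrite /rescale ler_pM2r ?invr_gt0 ?mulr_gt0 //.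
  by apply: (oph_le f_oph (posvec_mul px) (posvec_mul py)) => k; rewrite ler_pM2l.
- move=> t x t0 px; apply: funext => i; rewrite /rescale.
  have -> : (fun k => u k * (t * x k)) = vscale t (fun k => u k * x k).
    by apply: funext => k; rewrite /vscale mulrCA.
  by rewrite (oph_vscale f_oph) ?mulrA //; exact: posvec_mul.
Qed.

Lemma rescale_divE x : posvec x -> rescale u c (fun k => x k / u k) = fun i => f x i / (c * u i).
Proof.
move=> px; rewrite /rescale; have -> // : (fun k => u k * (x k / u k)) = x.
by apply: funext => k; rewrite mulrC divfK // gt_eqF.
Qed.

Lemma cw_separated_rescale : cw_separated f -> cw_separated (rescale u c).
Proof.
move=> sep K K0 K1; have [e [y [z [py pz fy fz]]]] := sep K K0 K1.
have pdiv x : posvec x -> posvec (fun k => x k / u k) by move=> px k; rewrite divr_gt0.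
exists (e / c), (fun k => y k / u k), (fun k => z k / u k).
split; [exact: pdiv | exact: pdiv | |].
- move=> i iK; rewrite rescale_divE // ltr_pdivrMr ?mulr_gt0 //.
  have ui := pu i; suff -> : e / c * (y i / u i) * (c * u i) = e * y i by exact: fy.
  by field; rewrite !gt_eqF.
- move=> i iK; rewrite rescale_divE // ltr_pdivlMr ?mulr_gt0 //.
  have ui := pu i; suff -> : e / c * (z i / u i) * (c * u i) = e * z i by exact: fz.
  by field; rewrite !gt_eqF.
Qed.

Lemma rescale_eigen x mu : posvec x -> f x = vscale mu x ->
  rescale u c (fun k => x k / u k) = vscale (mu / c) (fun k => x k / u k).
Proof.
move=> px fx; rewrite rescale_divE // fx; apply: funext => i.
by rewrite /vscale; have := pu i; move=> ui; field; rewrite !gt_eqF.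
Qed.

Lemma rescale_fixed_eigen v : rescale u c v = v ->
  f (fun k => u k * v k) = vscale c (fun k => u k * v k).
Proof.
move=> gv; apply: funext => k; have := congr1 (fun h => h k) gv; rewrite /rescale /vscale => e.
have uk := pu k; rewrite -[in RHS]e; field; rewrite !gt_eqF //.
Qed.

Lemma rescale_vconst1 : f u = vscale c u -> rescale u c (vconst 1) = vconst 1.
Proof.
move=> fu; apply: funext => i; rewrite /rescale /vconst.
have -> : (fun k => u k * 1) = u by apply: funext => k; rewrite mulr1.
by rewrite fu /vscale divff // gt_eqF // mulr_gt0.
Qed.

End Rescaling.

Lemma eigenvalue_gt0 (R : realType) (n : nat) (f : ('I_n -> R) -> 'I_n -> R) x mu (i0 : 'I_n) :
  oph_map f -> posvec x -> f x = vscale mu x -> 0 < mu.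
Proof.
by move=> f_oph px fx; have := oph_pos f_oph px i0; rewrite fx /vscale pmulr_lgt0.
Qed.

Lemma pos_eigenvectors_bounded (R : realType) (n : nat) (f : ('I_n -> R) -> 'I_n -> R) :
  oph_map f -> cw_separated f ->
  exists M, forall x y, pos_eigenvectors f x -> pos_eigenvectors f y -> hilbert_dist x y <= M.
Proof.
move=> f_oph sep.
have [[u [pu [mu fu]]]|noE] := pselect (exists u, pos_eigenvectors f u); last first.
  by exists 0 => x y Ex; exfalso; apply: noE; exists x.
have g_oph := oph_rescale f_oph pu ltr01.
have [S S1 no_gap] := exists_gap_bound g_oph (cw_separated_rescale pu ltr01 sep).
set K := S + 1.
have K1 : 1 < K by rewrite /K; lra.
have ratio x : pos_eigenvectors f x -> forall i k, x i / u i <= K ^+ n * (x k / u k).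
  move=> [px [nu fx]] i k; apply: ltW; have pxu : posvec (fun k => x k / u k).
    by move=> l; rewrite divr_gt0.
  apply: (ungapped_ratio_lt K1 pxu _ i k) => K' K'0 K'1 gx.
  have gxu := rescale_eigen pu ltr01 px fx; rewrite divr1 in gxu.
  apply: (no_gap K' K'0 K'1 nu _ pxu (gapped_le pxu _ gx)); first by rewrite /K; lra.
  by rewrite /split_eigen gxu /vscale; split=> j _.
exists (ln (K ^+ n * K ^+ n)) => x y Ex Ey.
apply: hilbert_dist_le pu (proj1 Ex) (proj1 Ey) _ (ratio x Ex) (ratio y Ey).
exact: exprn_ege1 (ltW K1).
Qed.

Section PaddedMap.
Variables (R : realType) (n : nat).
Notation vec := ('I_n -> R).
Variables (g : vec -> vec) (J : {set 'I_n}) (s : R).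
Hypotheses (g_oph : oph_map g) (s1 : 1 <= s) (J0 : J != finset.set0).

Definition pad (x : vec) : vec := fun l => if l \in J then x l else vmax x / s.

(* The peaked sub-eigenvector of [g] is cut out of an eigenvector of this
   auxiliary map, which exists because the map is cw_separated. *)
Definition padded_map (x : vec) : vec := fun k =>
  if k \in J then g (pad x) k + 2^-1 * Num.max (x k) (vmax x / s) else 2^-1 * vmax x.

Let s0 : 0 < s := lt_le_trans ltr01 s1.

Lemma posvec_pad x : posvec x -> posvec (pad x).
Proof.
move=> px l; rewrite /pad; case: (l \in J) => //.
by have /set0Pn[i0 _] := J0; rewrite divr_gt0 // (vmax_gt0 i0 px).
Qed.

Lemma oph_padded_map : oph_map padded_map.
Proof.
have /set0Pn[i0 _] := J0.
split.
- move=> x px k; rewrite /padded_map; case: (k \in J); last by rewrite mulr_gt0 // (vmax_gt0 i0 px).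
  by rewrite addr_gt0 ?mulr_gt0 ?lt_max ?px //; exact: (oph_pos g_oph (posvec_pad px)).
- move=> x y px py xy k; have Mxy := vmax_mono xy; rewrite /padded_map.
  case: (k \in J); last by rewrite ler_pM2l.
  apply: lerD; last by rewrite ler_pM2l // le_max2 // ler_pM2r ?invr_gt0.
  apply: (oph_le g_oph (posvec_pad px) (posvec_pad py)) => l; rewrite /pad.
  by case: (l \in J); rewrite ?ler_pM2r ?invr_gt0.
- move=> t x t0 px; apply: funext => k; rewrite /padded_map -/(vscale t x) vmax_vscale //.
  have -> : pad (vscale t x) = vscale t (pad x).
    by apply: funext => l; rewrite /pad /vscale vmax_vscale //; case: (l \in J); rewrite ?mulrA.
  rewrite (oph_vscale g_oph) //; last exact: posvec_pad.
  case: (k \in J); last by rewrite mulrCA.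
  rewrite /vscale mulrDr; congr (_ + _); rewrite mulrCA; congr (_ * _).
  by rewrite (maxr_pMr _ _ (ltW t0)) mulrA.
Qed.

Lemma cw_separated_padded_map : cw_separated padded_map.
Proof.
move=> K /set0Pn[k1 k1K] K1.
set c := 1 + vmax (padded_map (vconst 1)).
have c0 : 0 < c by rewrite /c; have := vmax_ge0 (padded_map (vconst 1)); lra.
set L := 2 * s * (c + 1).
have L0 : 0 < L by rewrite /L !mulr_gt0 //; lra.
set z : vec := fun k => if k \in K then L else 1.
have pz : posvec z by move=> k; rewrite /z; case: (k \in K).
have Lz : L <= vmax z by have := vmax_ge z k1; rewrite /z k1K.
have cLz : c < 2^-1 * (vmax z / s).
  apply: lt_le_trans (_ : 2^-1 * (L / s) <= _); last by rewrite ler_pM2l // ler_pM2r ?invr_gt0.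
  by rewrite /L (_ : 2^-1 * (2 * s * (c + 1) / s) = c + 1); [lra | field; rewrite gt_eqF].
exists c, (vconst 1), z; split => //.
- by move=> i _; rewrite /vconst mulr1 /c; apply: le_lt_trans (vmax_ge _ i) _; lra.
- move=> i iK; rewrite /z (negbTE iK) mulr1 /padded_map; apply: lt_le_trans cLz _.
  case: (i \in J).
    rewrite -[leLHS]add0r; apply: lerD; first exact: ltW (oph_pos g_oph (posvec_pad pz) i).
    by rewrite ler_pM2l // le_max lexx orbT.
  rewrite ler_pM2l // ler_pdivrMr // ler_peMr //.
  exact: le_trans (ltW (pz k1)) (vmax_ge z k1).
Qed.

Hypotheses (g1 : vle (vconst 1) (g (vconst 1)))
  (sub_on_J : forall y, posvec y -> exists2 j, j \in J & y j <= g y j).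

(* [sub_on_J] forces the eigenvalue rho to be at least 3/2; where x is not
   small the eigen-equation then reads g (pad x) k = (rho - 1/2) x k on J. *)
Lemma padded_eigenvector_sub x rho : posvec x -> padded_map x = vscale rho x ->
  (exists2 k0, k0 \in J & vmax x = x k0) /\
  forall k, k \in J -> vmax x / s <= x k -> x k <= g (pad x) k.
Proof.
move=> px Px; have /set0Pn[i0 _] := J0.
have Pxk k : padded_map x k = rho * x k by rewrite Px.
have [j jJ gj] := sub_on_J (posvec_pad px).
have rho_ge : 3 / 2 <= rho.
  have xj := px j; rewrite -(ler_pM2r xj); apply: le_trans (_ : x j + 2^-1 * x j <= _); first lra.
  rewrite -Pxk /padded_map jJ; apply: lerD; first by move: gj; rewrite /pad jJ.
  by rewrite ler_pM2l // le_max lexx.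
have [k0 xk0] := vmax_attained i0 px.
split.
  exists k0 => //; apply: contraT => k0J; have := Pxk k0; rewrite /padded_map (negbTE k0J) xk0.
  by have xk := px k0; move/(mulIf (lt0r_neq0 xk)) => rhoE; move: rho_ge; rewrite -rhoE; lra.
move=> k kJ xk; have := Pxk k; rewrite /padded_map kJ (max_idPl xk) => Pk.
have -> : g (pad x) k = (rho - 2^-1) * x k by rewrite mulrBl -Pk; ring.
by rewrite ler_peMl ?(ltW (px k)) //; lra.
Qed.

Lemma exists_peaked_subeigenvector : exists a, [/\ vle (vconst 1) a, vle a (vconst s),
  (forall k, k \notin J -> a k = 1), (exists2 j, j \in J & a j = s) & vle a (g a)].
Proof.
have /set0Pn[i0 _] := J0.
have [x px [rho Px]] := exists_pos_eigenvector oph_padded_map cw_separated_padded_map.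
have [[k0 k0J xk0] g_pad] := padded_eigenvector_sub px Px.
set M := vmax x; have M0 : 0 < M := vmax_gt0 i0 px.
pose a : vec := fun k => if k \in J then Num.max (s * x k / M) 1 else 1.
have a1 : vle (vconst 1) a.
  by move=> k; rewrite /a /vconst; case: (k \in J); rewrite ?le_max lexx ?orbT.
have pa : posvec a by move=> k; exact: lt_le_trans ltr01 (a1 k).
exists a; split => //.
- move=> k; rewrite /a /vconst; case: (k \in J) => //; rewrite ge_max s1 andbT.
  by rewrite ler_pdivrMr // ler_pM2l //; exact: vmax_ge.
- by move=> k kJ; rewrite /a (negbTE kJ).
- by exists k0 => //; rewrite /a k0J -xk0 -/M mulfK ?gt_eqF // (max_idPl s1).
have ga1 : vle (vconst 1) (g a).
  by apply: vle_trans g1 (oph_le g_oph (posvec_vconst ltr01) pa a1).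
move=> k; case: (boolP (k \in J)) => kJ; last by rewrite /a (negbTE kJ); exact: ga1.
rewrite {1}/a kJ ge_max ga1 andbT.
case: (lerP 1 (s * x k / M)) => hk; last exact: le_trans (ltW hk) (ga1 k).
have sM : 0 < s / M by rewrite divr_gt0.
have pad_le_a : vle (vscale (s / M) (pad x)) a.
  move=> l; rewrite /vscale /pad /a; case: (l \in J).
    by rewrite le_max mulrAC mulrC mulrA lexx.
  by rewrite mulrA divfK ?gt_eqF // divff ?gt_eqF.
apply: le_trans (oph_vscale_le g_oph sM pa (posvec_pad px) pad_le_a k).
rewrite /vscale mulrAC ler_pM2l //; apply: g_pad => //.
by rewrite ler_pdivrMr // mulrC; rewrite ler_pdivlMr // mul1r in hk.
Qed.

End PaddedMap.

Section Extensions.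
Variables (R : realType) (n : nat).
Notation vec := ('I_n -> R).
Notation evec := ('I_n -> \bar R).
Variable f : vec -> vec.
Hypothesis f_oph : oph_map f.

Lemma posvec_add_const (x : vec) e : (forall k, 0 <= x k) -> 0 < e -> posvec (fun k => x k + e).
Proof. by move=> x0 e0 k; apply: lt_le_trans e0 _; rewrite lerDr. Qed.

Lemma ext0_le (x y : vec) : posvec y -> (forall k, 0 <= x k) -> vle x y -> vle (ext0 f x) (f y).
Proof.
move=> py x0 xy i.
have [k0 [_ min_k0]] := @exists_argmin _ _ xpredT y i isT.
set m := y k0; have m0 : 0 < m := py k0.
have fy0 := oph_pos f_oph py i.
apply/ler_addgt0Pr => eps eps0.
set e := eps * m / f y i.
have e0 : 0 < e by rewrite /e !mulr_gt0 ?invr_gt0.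
have lb : has_lbound [set f (fun k => x k + e') i | e' in [set e' : R | 0 < e']].
  by exists 0 => _ [e' e'0 <-]; exact: ltW (oph_pos f_oph (posvec_add_const x0 e'0) i).
apply: le_trans (ge_inf lb (_ : _ (f (fun k => x k + e) i))) _; first by exists e.
have t0 : 0 < 1 + e / m by rewrite addr_gt0 // divr_gt0.
have xey : vle (fun k => x k + e) (vscale (1 + e / m) y).
  move=> k; rewrite /vscale mulrDl mul1r; apply: lerD => //.
  by rewrite mulrAC ler_pdivlMr // ler_pM2l // min_k0.
apply: le_trans (oph_le_vscale f_oph t0 (posvec_add_const x0 e0) py xey i) _.
rewrite /vscale mulrDl mul1r lerD2l (_ : e / m * f y i = eps) //.
by rewrite /e; field; rewrite ?gt_eqF.
Qed.

Lemma trunc_ge (z : vec) (w : evec) t : (forall k, z k <= t) ->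
  (forall k, ((z k)%:E <= w k)%E) -> vle z (trunc w t).
Proof.
move=> zt zw k; rewrite /trunc; move: (zw k) (zt k); case: (w k) => [r| |] //= h1 h2.
by rewrite -EFin_min /= le_min -lee_fin h1 h2.
Qed.

Lemma posvec_trunc (w : evec) t : 0 < t -> (forall k, (0 < w k)%E) -> posvec (trunc w t).
Proof.
move=> t0 w0 k; rewrite /trunc; move: (w0 k); case: (w k) => [r| |] //= h.
by rewrite -EFin_min /= lt_min -lte_fin h t0.
Qed.

Lemma trunc_mono (w : evec) t t' : t <= t' -> (forall k, (0 < w k)%E) ->
  vle (trunc w t) (trunc w t').
Proof.
move=> tt w0 k; rewrite /trunc; move: (w0 k); case: (w k) => [r| |] //= h.
by rewrite -!EFin_min /=; apply: le_min2.
Qed.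

Lemma le_extinf (z : vec) (w : evec) i : posvec z ->
  (forall k, ((z k)%:E <= w k)%E) -> ((f z i)%:E <= extinf f w i)%E.
Proof.
move=> pz zw; have t0 := vmax_gt0 i pz.
have zt := trunc_ge (@vmax_ge _ _ z) zw.
have pt : posvec (trunc w (vmax z)) by move=> k; exact: lt_le_trans (pz k) (zt k).
apply: (@le_trans _ _ (f (trunc w (vmax z)) i)%:E).
  by rewrite lee_fin (oph_le f_oph pz pt zt).
by apply: ereal_sup_ubound; exists (vmax z).
Qed.

Lemma f0J_le (J : {set 'I_n}) y i : posvec y ->
  f0J f J y i <= if i \in J then f y i else 0.
Proof.
move=> py; rewrite /f0J {1}/P0; case: (i \in J) => //.
apply: (ext0_le py) => k; rewrite /P0; case: (k \in J) => //; exact: ltW.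
Qed.

Lemma cw_upper_f0J_le (J : {set 'I_n}) y : posvec y ->
  (cw_upper (f0J f J) <= (\big[Num.max/0]_(i in J) (f y i / y i))%:E)%E.
Proof.
move=> py; apply: le_trans (ereal_inf_lbound _) _; first by exists y.
rewrite lee_fin; apply: bigmax_le => [|i _]; first by apply/bigmax_geP; left.
have := f0J_le J i py; case: (boolP (i \in J)) => iJ fy.
  apply: le_trans (le_bigmax_cond _ (fun i => f y i / y i) iJ).
  by rewrite ler_pM2r ?invr_gt0.
apply: le_trans (_ : 0 <= _); last by apply/bigmax_geP; left.
by rewrite pmulr_lle0 ?invr_gt0.
Qed.

Lemma finfJ_in (J : {set 'I_n}) x i : i \in J -> finfJ f (~: J) x i = +oo%E.
Proof. by move=> iJ; rewrite /finfJ /Pinf inE iJ. Qed.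

Lemma le_finfJ (J : {set 'I_n}) z i : posvec z -> i \notin J ->
  ((f z i)%:E <= finfJ f (~: J) (fun k => (z k)%:E) i)%E.
Proof.
move=> pz iJ; rewrite /finfJ /Pinf inE iJ /=.
by apply: le_extinf pz _ => k; rewrite /Pinf inE; case: (k \in J) => //=; exact: leey.
Qed.

Lemma cw_lower_finfJ_ge (J : {set 'I_n}) z : posvec z ->
  (\big[Order.min/+oo]_(i | i \notin J) (f z i / z i)%:E <= cw_lower (finfJ f (~: J)))%E.
Proof.
move=> pz; apply: le_trans (ereal_sup_ubound _); last by exists z.
apply: le_bigmin => [|i _]; first exact: leey.
have [iJ|iJ] := boolP (i \in J).
  by rewrite finfJ_in // gt0_mulye ?lte_fin ?invr_gt0 // leey.
apply: le_trans (bigmin_le_cond _ (fun k => (f z k / z k)%:E) iJ) _.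
by rewrite EFinM; apply: lee_wpmul2r; [rewrite lee_fin invr_ge0 ltW | exact: le_finfJ].
Qed.

Lemma ext0_witness (J : {set 'I_n}) (x : vec) c : posvec x ->
  (forall j, j \in J -> ext0 f (P0 J x) j < c * x j) ->
  exists2 y, posvec y & forall j, j \in J -> f y j < c * y j.
Proof.
move=> px hx.
have P0x k : 0 <= P0 J x k by rewrite /P0; case: (k \in J) => //; exact: ltW.
pose xe e := fun k => P0 J x k + e.
have pxe e : 0 < e -> posvec (xe e) by exact: posvec_add_const.
have he j : exists e, 0 < e /\ (j \in J -> f (xe e) j < c * x j).
  have [jJ|jJ] := boolP (j \in J); last by exists 1.
  set E := [set f (xe e) j | e in [set e : R | 0 < e]].
  have hE : has_inf E.
    split; first by exists (f (xe 1) j), 1 => //; exact: ltr01.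
    by exists 0 => _ [e e0 <-]; exact: ltW (oph_pos f_oph (pxe _ e0) j).
  have ep : 0 < c * x j - inf E by rewrite subr_gt0; exact: hx.
  have [_ [e e0 <-] lt] := inf_adherent ep hE.
  by exists e; split => // _; move: lt; rewrite addrCA subrr addr0.
have [eps heps] := choice he.
set e := \big[Num.min/1]_k eps k.
have e0 : 0 < e by apply: lt_bigmin => // k _; case: (heps k).
exists (xe e) => [|j jJ]; first exact: pxe.
have [ej0 hj] := heps j; have lt := hj jJ.
have le : f (xe e) j <= f (xe (eps j)) j.
  by apply: (oph_le f_oph (pxe _ e0) (pxe _ ej0)) => k; rewrite lerD2l; exact: bigmin_le.
have c0 : 0 < c.
  by have := lt_trans (oph_pos f_oph (pxe _ e0) j) (le_lt_trans le lt); rewrite pmulr_lgt0.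
apply: le_lt_trans le (lt_le_trans lt _).
by rewrite ler_pM2l // /xe /P0 jJ lerDl ltW.
Qed.

Lemma extinf_witness (J : {set 'I_n}) (z : vec) c : posvec z -> 0 < c ->
  (forall i, i \notin J -> ((c * z i)%:E < extinf f (Pinf (~: J) (fun k => (z k)%:E)) i)%E) ->
  exists2 z', posvec z' & forall i, i \notin J -> c * z' i < f z' i.
Proof.
move=> pz c0 hz; set w := Pinf (~: J) (fun k => (z k)%:E).
have w0 k : (0 < w k)%E by rewrite /w /Pinf inE; case: (k \in J) => //=; rewrite lte_fin.
have ht i : exists t, 0 < t /\ (i \notin J -> c * z i < f (trunc w t) i).
  have [iJ|iJ] := boolP (i \in J); first by exists 1.
  by have [_ [t t0 <-]] := ereal_sup_gt (hz i iJ); rewrite lte_fin => lt; exists t.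
have [tau htau] := choice ht.
set T := \big[Num.max/1]_k tau k.
have T0 : 0 < T by apply: lt_le_trans ltr01 _; apply/bigmax_geP; left.
exists (trunc w T) => [|i iJ]; first exact: posvec_trunc.
have [ti0 hi] := htau i; have lt := hi iJ.
have le : f (trunc w (tau i)) i <= f (trunc w T) i.
  apply: (oph_le f_oph (posvec_trunc ti0 w0) (posvec_trunc T0 w0)).
  by apply: trunc_mono w0; exact: (le_bigmax _ tau i).
apply: le_lt_trans (lt_le_trans lt le); rewrite ler_pM2l //.
by rewrite /trunc /w /Pinf inE iJ /= -EFin_min /= ge_min lexx.
Qed.

End Extensions.

Lemma ereal_lt_between (R : realType) (r : R) (e : \bar R) :
  (r%:E < e)%E -> exists2 c : R, r < c & (c%:E < e)%E.
Proof.
case: e => [t| |] //= => [|_]; last by exists (r + 1); [lra | exact: ltry].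
by rewrite lte_fin => rt; exists ((r + t) / 2); rewrite ?lte_fin; lra.
Qed.

Section CollatzWielandt.
Variables (R : realType) (n : nat).
Notation vec := ('I_n -> R).
Variable f : vec -> vec.
Hypothesis f_oph : oph_map f.

Lemma cw_separated_of_cw_lt :
  (forall J : {set 'I_n}, J != finset.set0 -> J != finset.setT ->
     (cw_upper (f0J f J) < cw_lower (finfJ f (~: J)))%E) ->
  cw_separated f.
Proof.
move=> cw_lt K K0 K1.
have [_ [x px <-] xr] := ereal_inf_lt (cw_lt K K0 K1).
have [c rc cz] := ereal_lt_between xr.
have c0 : 0 < c by apply: le_lt_trans rc; apply/bigmax_geP; left.
have [_ [z pz <-] zc] := ereal_sup_gt cz.
have [y py fy] : exists2 y, posvec y & forall j, j \in K -> f y j < c * y j.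
  apply: (ext0_witness f_oph px) => j jK.
  have := le_lt_trans (le_bigmax 0 (fun i => f0J f K x i / x i) j) rc.
  by rewrite /f0J /P0 jK ltr_pdivrMr.
have [z' pz' fz'] : exists2 z', posvec z' & forall i, i \notin K -> c * z' i < f z' i.
  apply: (extinf_witness f_oph pz c0) => i iK.
  move/bigmin_gtP: zc => [_ /(_ i isT)].
  by rewrite lte_pdivlMr // -EFinM /finfJ /Pinf inE iK.
by exists c, y, z'.
Qed.

Variables (J : {set 'I_n}) (u : vec) (mu : R).
Hypotheses (pu : posvec u) (fu : f u = vscale mu u) (mu0 : 0 < mu)
  (cw_ge : (cw_lower (finfJ f (~: J)) <= cw_upper (f0J f J))%E).

Let mu_le_cw_lower : (mu%:E <= cw_lower (finfJ f (~: J)))%E.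
Proof.
apply: le_trans (cw_lower_finfJ_ge f_oph J pu); apply: le_bigmin => [|i _]; first exact: leey.
by rewrite fu /vscale mulfK ?gt_eqF.
Qed.

Let cw_upper_le_mu : (cw_upper (f0J f J) <= mu%:E)%E.
Proof.
apply: le_trans (cw_upper_f0J_le f_oph J pu) _; rewrite lee_fin.
by apply: bigmax_le => [|i _]; [exact: ltW | rewrite fu /vscale mulfK ?gt_eqF].
Qed.

Lemma sub_on_J_of_cw_ge y : posvec y -> exists2 j, j \in J & mu * y j <= f y j.
Proof.
move=> py; apply: contrapT => sub; have fy j : j \in J -> f y j < mu * y j.
  by move=> jJ; rewrite ltNge; apply/negP => le; apply: sub; exists j.
suff : (cw_upper (f0J f J) < mu%:E)%E.
  by rewrite ltNge (le_trans mu_le_cw_lower cw_ge).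
apply: le_lt_trans (cw_upper_f0J_le f_oph J py) _; rewrite lte_fin.
by apply: bigmax_lt => // i iJ; rewrite ltr_pdivrMr ?fy.
Qed.

Lemma super_off_J_of_cw_ge z : posvec z -> exists2 i, i \notin J & f z i <= mu * z i.
Proof.
move=> pz; apply: contrapT => super; have fz i : i \notin J -> mu * z i < f z i.
  by move=> iJ; rewrite ltNge; apply/negP => le; apply: super; exists i.
suff : (mu%:E < cw_lower (finfJ f (~: J)))%E.
  by rewrite ltNge (le_trans cw_ge cw_upper_le_mu).
apply: lt_le_trans (cw_lower_finfJ_ge f_oph J pz); apply: lt_bigmin => [|i iJ]; first exact: ltry.
by rewrite lte_fin ltr_pdivlMr ?fz.
Qed.

Let posvec_mul y : posvec y -> posvec (fun k => u k * y k).
Proof. by move=> py k; rewrite mulr_gt0. Qed.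

Lemma rescale_sub_on_J y : posvec y -> exists2 j, j \in J & y j <= rescale f u mu y j.
Proof.
move=> py; have [j jJ fj] := sub_on_J_of_cw_ge (posvec_mul py).
by exists j => //; rewrite /rescale ler_pdivlMr ?mulr_gt0 // mulrCA [y j * _]mulrC.
Qed.

Lemma rescale_dual_sub_off_J y : posvec y ->
  exists2 j, j \in ~: J & y j <= dual (rescale f u mu) y j.
Proof.
move=> py; set z := fun k => u k * vinv y k.
have pz : posvec z := posvec_mul (posvec_vinv py).
have [j jJ fj] := super_off_J_of_cw_ge pz.
exists j; first by rewrite inE.
have fz := oph_pos f_oph pz j; have uj := pu j; have yj := py j.
rewrite /dual /vinv /rescale -/z -[leLHS]invrK lef_pV2 ?posrE ?invr_gt0 ?divr_gt0 ?mulr_gt0 //.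
rewrite ler_pdivrMr ?mulr_gt0 //; apply: le_trans fj _.
by rewrite /z /vinv [leRHS]mulrC -mulrA.
Qed.

End CollatzWielandt.

Section SpreadFixpoint.
Variables (R : realType) (n : nat).
Notation vec := ('I_n -> R).

Lemma vinv_vconst1 : vinv (vconst 1) = vconst 1 :> vec.
Proof. by apply: funext => k; rewrite /vinv /vconst invr1. Qed.

(* The peaked sub-eigenvectors of g on J and of its dual on ~: J enclose a box
   of ratio s that g maps into itself. *)
Lemma exists_spread_fixpoint (g : vec -> vec) (J : {set 'I_n}) s :
  oph_map g -> g (vconst 1) = vconst 1 -> J != finset.set0 -> J != finset.setT -> 1 <= s ->
  (forall y, posvec y -> exists2 j, j \in J & y j <= g y j) ->
  (forall y, posvec y -> exists2 j, j \in ~: J & y j <= dual g y j) ->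
  exists2 v, posvec v & g v = v /\ exists i j, s * v i <= v j.
Proof.
move=> g_oph g1 J0 J1 s1 sub_J sub_Jc; have s0 : 0 < s := lt_le_trans ltr01 s1.
have g1' : vle (vconst 1) (g (vconst 1)) by rewrite g1.
have [a [a1 a_s aJc [j jJ aj] a_ga]] := exists_peaked_subeigenvector g_oph s1 J0 g1' sub_J.
have dg1 : vle (vconst 1) (dual g (vconst 1)) by rewrite /dual vinv_vconst1 g1 vinv_vconst1.
have Jc0 : ~: J != finset.set0 by rewrite -finset.setCT (inj_eq (@finset.setC_inj _)).
have [a' [a'1 a'_s a'J [i iJc a'i] a'_ga']] :=
  exists_peaked_subeigenvector (oph_dual g_oph) s1 Jc0 dg1 sub_Jc.
have pa : posvec a by move=> k; exact: lt_le_trans ltr01 (a1 k).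
have pa' : posvec a' by move=> k; exact: lt_le_trans ltr01 (a'1 k).
set b := vscale s (vinv a').
have gb : vle (g b) b.
  rewrite /b (oph_vscale g_oph) //; last exact: posvec_vinv.
  move=> k; rewrite /vscale ler_pM2l //; have := a'_ga' k.
  have gk := oph_pos g_oph (posvec_vinv pa') k.
  by rewrite /dual {2}/vinv -[X in X <= _ -> _]invrK lef_pV2 ?posrE ?invr_gt0.
have ab : vle a b.
  move=> k; rewrite /b /vscale /vinv; have [kJ|kJ] := boolP (k \in J).
    have -> : a' k = 1 by apply: a'J; rewrite inE kJ.
    by rewrite invr1 mulr1; exact: a_s.
  by rewrite aJc // ler_pdivlMr // mul1r; exact: a'_s.
have g_op : order_preserving_map g by case: g_oph.
have [v bv gv] := box_fixpoint_sub_super pa g_op ab a_ga gb.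
exists v; first exact: posvec_box pa bv.
split => //; exists i, j; apply: le_trans (_ : s <= v j); last by rewrite -aj; case: (bv j).
rewrite -[leRHS]mulr1 ler_pM2l //; apply: le_trans (proj2 (bv i)) _.
by rewrite /b /vscale /vinv a'i divff // gt_eqF.
Qed.

End SpreadFixpoint.

Lemma exists_far_eigenvector (R : realType) (n : nat) (f : ('I_n -> R) -> 'I_n -> R)
    (J : {set 'I_n}) (u : 'I_n -> R) s :
  oph_map f -> pos_eigenvectors f u -> J != finset.set0 -> J != finset.setT ->
  (cw_lower (finfJ f (~: J)) <= cw_upper (f0J f J))%E -> 1 <= s ->
  exists2 w, pos_eigenvectors f w & ln s <= hilbert_dist u w.
Proof.
move=> f_oph [pu [mu fu]] J0 J1 cw_ge s1.
have /set0Pn[j0 _] := J0.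
have mu0 : 0 < mu := eigenvalue_gt0 j0 f_oph pu fu.
have [v pv [gv [i [j vij]]]] := exists_spread_fixpoint (oph_rescale f_oph pu mu0)
  (rescale_vconst1 pu mu0 fu) J0 J1 s1 (rescale_sub_on_J f_oph pu fu mu0 cw_ge)
  (rescale_dual_sub_off_J f_oph pu fu mu0 cw_ge).
set w := fun k => u k * v k.
have pw : posvec w by move=> k; rewrite mulr_gt0.
have Ew : pos_eigenvectors f w by split => //; exists mu; exact: rescale_fixed_eigen gv.
exists w => //; apply: le_trans (hilbert_dist_ge j i pu pw).
have ui := pu i; have uj := pu j; have vi := pv i; have vj := pv j.
rewrite ler_ln ?posrE ?(lt_le_trans ltr01 s1) ?(mulr_gt0, invr_gt0) //.
rewrite (_ : w j * u i / (u j * w i) = v j / v i); first by rewrite ler_pdivlMr.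
by rewrite /w; field; rewrite !gt_eqF.
Qed.

Theorem theorem3p1 (R : realType) (n : nat) (f : ('I_n -> R) -> ('I_n -> R)) :
  maps_pos f -> order_preserving_map f -> homogeneous_map f ->
  (nonempty_bounded_hilbert (pos_eigenvectors f) <->
   forall J : {set 'I_n}, J != finset.set0 -> J != finset.setT ->
     (cw_upper (f0J f J) < cw_lower (finfJ f (~: J)))%E).
Proof.
move=> mp op hg; have f_oph : oph_map f by split.
split=> [[[u Eu] [M boundM]] J J0 J1|cw_lt].
  rewrite ltNge; apply/negP => cw_ge.
  have s1 : 1 <= Num.max 1 (sequences.expR (M + 1)) by rewrite le_max lexx.
  have [w Ew far] := exists_far_eigenvector f_oph Eu J0 J1 cw_ge s1.
  have : M + 1 <= M.
    apply: le_trans (boundM u w Eu Ew); apply: le_trans far.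
    by rewrite -[leLHS]expRK ler_ln ?posrE ?expR_gt0 ?(lt_le_trans ltr01 s1) // le_max lexx orbT.
  lra.
have sep := cw_separated_of_cw_lt f_oph cw_lt.
split; last exact: pos_eigenvectors_bounded f_oph sep.
by have [x px [mu fx]] := exists_pos_eigenvector f_oph sep; exists x; split => //; exists mu.
Qed.
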